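(* Let $\mathcal{S}$ be a sheaf of pseudometric spaces on a topological space $(X,\mathcal{T})$, $a$ an assignment to $\mathcal{S}$, and $U\in\mathcal{T}$. Let $\mathcal{T}\cap U=\{V\in\mathcal{T}:V\subseteq U\}$ and regard $a$ as an assignment supported on $\mathcal{T}\cap U$ by restriction. Then $c_{\mathcal{S}}(a,\mathcal{T}\cap U)\ge c_{\mathcal{S}}(a,U)$.
   Context: A sheaf of pseudometric spaces on $(X,\mathcal{T})$ is a sheaf of sets $\mathcal{S}$ with a pseudometric $d_W$ on each $\mathcal{S}(W)$ making all restriction maps continuous. An assignment is any $b\in\prod_{W\in\mathcal{T}}\mathcal{S}(W)$, with consistency radius $c_{\mathcal{S}}(b)=\sup_{W_1\subseteq W_2\in\mathcal{T}}d_{W_1}(\mathcal{S}(W_1\subseteq W_2)(b(W_2)),b(W_1))$. For a collection $\mathcal{U}\subseteq\mathcal{T}$, an assignment supported on $\mathcal{U}$ is an element $a\in\prod_{W\in\mathcal{U}}\mathcal{S}(W)$, and its consistency radius is $c_{\mathcal{S}}(a,\mathcal{U})=\inf\{c_{\mathcal{S}}(b): b\in\prod_{W\in\mathcal{T}}\mathcal{S}(W),\ b(W)=a(W)\text{ for all }W\in\mathcal{U}\}$. For open $U$, the local consistency radius of a (full) assignment $a$ is $c_{\mathcal{S}}(a,U)=\sup_{W_1\subseteq W_2\subseteq U,\ W_i\in\mathcal{T}}d_{W_1}\big(\mathcal{S}(W_1\subseteq W_2)(a(W_2)),a(W_1)\big)$. *)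

From HB Require Import structures.
From mathcomp Require Import all_boot all_order all_algebra.
From mathcomp Require Import all_classical all_reals all_analysis.
Unset Strict Implicit. Unset Printing Implicit Defensive.
Import Order.TTheory GRing.Theory Num.Theory.
Local Open Scope classical_set_scope.
Local Open Scope ring_scope.

(* The stalk-type S W is given for
   every subset W but only used for open W; the restriction map [res W1 W2]
   is given for every pair of sets but only constrained (and only used) when
   W1 `<=` W2 are open. *)
Record pmsheaf (R : realType) (X : topologicalType) := PMSheaf {
  sec : set X -> Type;
  res : forall W1 W2 : set X, sec W2 -> sec W1;
  dist : forall W : set X, sec W -> sec W -> R;
  res_id : forall W, open W -> forall s, res W W s = s;
  res_comp : forall W1 W2 W3, open W1 -> open W2 -> open W3 ->
    W1 `<=` W2 -> W2 `<=` W3 ->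
    forall s, res W1 W2 (res W2 W3 s) = res W1 W3 s;
  sheaf_locality : forall (U : set X) (I : Type) (V : I -> set X),
    open U -> (forall i, open (V i)) -> \bigcup_i V i = U ->
    forall s t : sec U, (forall i, res (V i) U s = res (V i) U t) -> s = t;
  sheaf_gluing : forall (U : set X) (I : Type) (V : I -> set X),
    open U -> (forall i, open (V i)) -> \bigcup_i V i = U ->
    forall f : forall i, sec (V i),
    (forall i j, res (V i `&` V j) (V i) (f i) = res (V i `&` V j) (V j) (f j)) ->
    exists s : sec U, forall i, res (V i) U s = f i;
  dist_refl : forall W (x : sec W), dist W x x = 0;
  dist_sym : forall W (x y : sec W), dist W x y = dist W y x;
  dist_triangle : forall W (x y z : sec W), dist W x z <= dist W x y + dist W y z;
  res_continuous : forall W1 W2, open W1 -> open W2 -> W1 `<=` W2 ->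
    forall (x : sec W2) (eps : R), 0 < eps -> exists2 delta : R, 0 < delta &
      forall y : sec W2, dist W2 x y < delta -> dist W1 (res W1 W2 x) (res W1 W2 y) < eps
}.

Arguments sec {R X} p _.
Arguments res {R X} p W1 W2 _.
Arguments dist {R X} p {W} _ _.

Section Radius.
Context {R : realType} {X : topologicalType} (S : pmsheaf R X).

Definition assignment := forall W : set X, sec S W.

Local Open Scope ereal_scope.

Definition consistency_radius (b : assignment) : \bar R :=
  ereal_sup [set r | exists W1 W2 : set X, [/\ open W1, open W2, W1 `<=` W2 &
     r = (dist S (res S W1 W2 (b W2)) (b W1))%:E]].

Definition supported_consistency_radius (a : assignment) (UU : set (set X)) : \bar R :=
  ereal_inf [set consistency_radius b | b in
     [set b : assignment | forall W, UU W -> b W = a W]].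

Definition local_consistency_radius (a : assignment) (U : set X) : \bar R :=
  ereal_sup [set r | exists W1 W2 : set X, [/\ open W1, open W2, W1 `<=` W2, W2 `<=` U &
     r = (dist S (res S W1 W2 (a W2)) (a W1))%:E]].

Definition opens_in (U : set X) : set (set X) := [set V | open V /\ V `<=` U].

End Radius.

From HB Require Import structures.
From mathcomp Require Import all_boot all_order all_algebra.
From mathcomp Require Import all_classical all_reals all_analysis.
Local Open Scope classical_set_scope.
Local Open Scope ereal_scope.

(* Every extension b of a from T ∩ U agrees with a on all pairs W1 ⊆ W2 ⊆ U, so
   c(a, U) = c(b, U), and the local radius of b is a supremum over fewer
   pairs than c(b). Taking the infimum over b gives the claim. *)

Section LocalConsistencyRadius.
Context {R : realType} {X : topologicalType} (S : pmsheaf R X).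

Lemma local_consistency_radius_le (a : assignment S) (U : set X) :
  local_consistency_radius S a U <= consistency_radius S a.
Proof.
apply: ereal_sup_le => _ [W1 [W2 [oW1 oW2 W12 _ ->]]].
by exists W1, W2.
Qed.

Lemma eq_local_consistency_radius (a b : assignment S) (U : set X) :
  (forall W, opens_in U W -> a W = b W) ->
  local_consistency_radius S a U = local_consistency_radius S b U.
Proof.
move=> eq_ab; congr ereal_sup; apply/seteqP; split => _
  [W1 [W2 [oW1 oW2 W12 W2U ->]]]; exists W1, W2; split => //.
- by rewrite -!eq_ab //; split => //; apply: subset_trans W2U.
- by rewrite !eq_ab //; split => //; apply: subset_trans W2U.
Qed.

End LocalConsistencyRadius.

Theorem proposition39 (R : realType) (X : topologicalType) (S : pmsheaf R X)
    (a : assignment S) (U : set X) (hU : open U) :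
  local_consistency_radius S a U <= supported_consistency_radius S a (opens_in U).
Proof.
apply: le_ereal_inf_tmp => _ [b b_ext <-].
rewrite (@eq_local_consistency_radius _ _ _ a b) => [|W UW]; last by rewrite b_ext.
exact: local_consistency_radius_le.
Qed.
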